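(* Let $m$ be a positive integer. For every integer $n$ with $\frac{3^{m-1}+1}{2}\le n\le \frac{3^{m-1}+1}{2}+3^{m-2}$, $$t(n)=\sum_{R=\lceil \frac{n-1}{3}\rceil}^{\lfloor\frac{2n+3^{m-2}-1}{4}\rfloor} t(R)\;-\;\sum_{R=\lceil\frac{3n+2}{5}\rceil}^{\lfloor\frac{2n+3^{m-2}-1}{4}\rfloor}\ \sum_{S=\lceil\frac{R-1}{3}\rceil}^{2R-n-1} t(S),$$ and for every integer $n$ with $\frac{3^{m-1}+1}{2}+3^{m-2}+1\le n\le\frac{3^m-1}{2}$, $$t(n)=\sum_{R=\lceil\frac{n-1}{3}\rceil}^{\frac{3^{m-1}-1}{2}} t(R).$$ (Empty sums are $0$.)
   Context: A weighing partition of a positive integer $n$ is a multiset of positive integers summing to $n$ such that every integer $\ell$ with $1\le\ell\le n$ can be written as $\sum_j u_jw_j$ with $u_j\in\{-1,0,1\}$ (weighing on a two-pan balance with weights on both pans). A feasible partition of $n$ is a weighing partition of $n$ whose number of parts is minimal among all weighing partitions of $n$. For a positive integer $n$, $t(n)$ denotes the number of feasible partitions of $n$ (as multisets), and by convention $t(0)=1$. *)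

From mathcomp Require Import all_boot all_order all_algebra.
From mathcomp Require Import boolp.
Set Implicit Arguments. Unset Strict Implicit. Unset Printing Implicit Defensive.
Import Order.TTheory GRing.Theory Num.Theory.

Local Open Scope ring_scope.

Definition weighable (w : seq nat) (l : int) : Prop :=
  exists u : seq int,
    size u = size w /\ all (fun c => c \in [:: -1; 0; 1]) u /\
    l = \sum_(j < size w) u`_j * (nth 0%N w j)%:Z.

(* A multiset is represented by any list of its elements (order irrelevant). *)
Definition weighing_partition (n : nat) (w : seq nat) : Prop :=
  [/\ sumn w = n, all (fun x => 0 < x)%N w &
      forall l : nat, (1 <= l <= n)%N -> weighable w l%:Z].

Definition feasible_partition (n : nat) (w : seq nat) : Prop :=
  weighing_partition n w /\
  forall w' : seq nat, weighing_partition n w' -> (size w <= size w')%N.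

(* Multisets of positive integers <= n with multiplicities <= n, encoded by
   their multiplicity function: f i = multiplicity of the value i+1.  Every
   multiset summing to n is encoded exactly once. *)
Definition parts_of (n : nat) (f : {ffun 'I_n -> 'I_n.+1}) : seq nat :=
  flatten [seq nseq (f i) (i.+1) | i <- enum 'I_n].

(* t n = number of feasible partitions of n (as multisets); t 0 = 1
   automatically (the empty multiset). *)
Definition t (n : nat) : nat :=
  #|[set f : {ffun 'I_n -> 'I_n.+1} | `[< feasible_partition n (parts_of f) >] ]|.

Definition sumZ (a b : int) (F : nat -> nat) : nat :=
  \sum_(0 <= k < (absz b).+1 | (a <= k%:Z) && (k%:Z <= b)) F k.

From mathcomp Require Import all_boot all_order all_algebra boolp.
From mathcomp Require Import zify ring lra.
Import Order.TTheory GRing.Theory Num.Theory.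
Set Implicit Arguments. Unset Strict Implicit. Unset Printing Implicit Defensive.

(* Listed in non-increasing order, a multiset of weights weighs every integer
   of [-n, n] iff it is complete: each part is at most 1 + twice the sum of
   the later ones.  Then 2n + 1 <= 3^k for k parts, and the feasible
   partitions of n are the complete ones with k = up_log 3 (2n + 1) parts
   (1, 3, ..., 3^(k-2) topped up by one part attains it).  Removing the
   largest part M of a complete partition leaves a complete partition of
   R = n - M with one part fewer and parts at most M, M being admissible iff
   3M <= 2n + 1.  In the upper range of n the bound M is never active and R
   has the feasible size for R; in the lower range it is active, and the
   partitions of R with a part above n - R are counted by the same recursion
   one level down, giving the subtracted double sum. *)

Local Open Scope ring_scope.

Fixpoint balances (w : seq nat) (l : int) : Prop :=
  if w is x :: r then exists2 c : int, c \in [:: -1; 0; 1] & balances r (l - c * x%:Z)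
  else l = 0.

Definition balanced (w : seq nat) :=
  forall l : int, - (sumn w)%:Z <= l <= (sumn w)%:Z -> balances w l.

Lemma weighableE w l : weighable w l <-> balances w l.
Proof.
elim: w l => [|x w IH] l /=.
  by split=> [[u [_ [_ ->]]]|->]; [rewrite big_ord0 | exists [::]; rewrite big_ord0].
split=> [[[|c u] [//= [su] [/andP[cP uP] ->]]]|[c cP /IH [u [su [uP el]]]]].
  exists c => //; apply/IH; exists u; do !split=> //.
  by rewrite big_ord_recl /= addrC addKr.
exists (c :: u); do !split; rewrite /= ?su ?cP //.
by rewrite big_ord_recl /= -el addrC subrK.
Qed.

Lemma balances0 w : balances w 0.
Proof. by elim: w => [|x w IH] //=; exists 0; rewrite // mul0r subr0. Qed.

Lemma balancesN w l : balances w l -> balances w (- l).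
Proof.
elim: w l => [|x w IH] l /=; first by move->; rewrite oppr0.
case=> c cP /IH Bw; exists (- c); last by rewrite mulNr opprK addrC -opprB.
by move: cP; rewrite !inE => /or3P [] /eqP ->.
Qed.

Lemma balances_bound w l : balances w l -> - (sumn w)%:Z <= l <= (sumn w)%:Z.
Proof.
elim: w l => [|x w IH] l /=; first by move->.
by case=> c + /IH; rewrite !inE PoszD => /or3P [] /eqP ->; lia.
Qed.

Lemma balances_rem x w l : x \in w -> balances w l <-> balances (x :: rem x w) l.
Proof.
elim: w l => [|y w IH] l //; rewrite inE /=.
case: eqVneq => [<- _|xy xw] /=; first exact: iff_refl.
have swap c d : l - c * y%:Z - d * x%:Z = l - d * x%:Z - c * y%:Z by ring.
split=> [[c cP /(IH _ xw) [d dP Bw]]|[d dP [c cP Bw]]].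
  by exists d => //; exists c; rewrite // -swap.
by exists c => //; apply/(IH _ xw); exists d; rewrite // swap.
Qed.

Lemma balances_perm w w' l : perm_eq w w' -> balances w l -> balances w' l.
Proof.
elim: w w' l => [|x w IH] w' l; first by rewrite perm_sym => /perm_nilP ->.
move=> ww'; have xw' : x \in w' by rewrite -(perm_mem ww') mem_head.
case=> c cP Bw; apply/(balances_rem _ xw'); exists c => //.
by apply: IH Bw; rewrite -(perm_cons x) (perm_trans ww') // perm_to_rem.
Qed.

Lemma balanced_perm w w' : perm_eq w w' -> balanced w -> balanced w'.
Proof.
by move=> ww' Bw l; rewrite -(perm_sumn ww') => /Bw; apply: balances_perm.
Qed.

Lemma weighing_partitionE n w :
  weighing_partition n w <-> [/\ sumn w = n, all (fun x => 0 < x)%N w & balanced w].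
Proof.
split=> [[sw pos Ww]|[sw pos Bw]]; split=> // l.
  move=> l_range; have Bl : balances w `|l|%N.
    have [->|l_gt0] := posnP `|l|%N; first exact: balances0.
    by apply/weighableE/Ww; rewrite -sw; lia.
  have [-> //|->] : l = `|l|%N \/ l = - (`|l|%N)%:Z by lia.
  exact: balancesN.
by move=> l_range; apply/weighableE/Bw; rewrite sw; lia.
Qed.

Definition small_sum (x : nat) (w : seq nat) := sumn [seq y <- w | (y < x)%N].

(* The deficit [sumn w - l] is a combination of the parts with coefficients in
   {0, 1, 2}; if it is smaller than [x], only parts smaller than [x] occur. *)
Lemma balances_deficit x w l : balances w l ->
  x%:Z <= (sumn w)%:Z - l \/ (sumn w)%:Z - l <= 2 * (small_sum x w)%:Z.
Proof.
rewrite /small_sum; elim: w l => [|y w IH] l /=; first by move->; right.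
case=> c cP Bw; have := balances_bound Bw; have := IH _ Bw.
by move: cP; rewrite !inE => /or3P [] /eqP -> []; case: ltnP => /= yx; rewrite ?PoszD; lia.
Qed.

Lemma small_sum_le x w : (small_sum x w <= sumn w)%N.
Proof. by rewrite /small_sum; elim: w => //= y w IH; case: ifP => _ /=; lia. Qed.

Lemma small_sum_mem x w : x \in w -> (small_sum x w + x <= sumn w)%N.
Proof.
rewrite /small_sum; elim: w => //= y w IH; rewrite inE.
have [<- _|_ /= /IH] := eqVneq x y; last by case: ifP => _ /=; lia.
by rewrite ltnn /=; have := small_sum_le x w; rewrite /small_sum; lia.
Qed.

Lemma balanced_small x w : balanced w -> x \in w -> (x <= 2 * small_sum x w + 1)%N.
Proof.
move=> Bw xw; rewrite leqNgt; apply/negP => x_big; have x_le := small_sum_mem xw.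
(* Weigh the amount whose deficit is 2 * small_sum x w + 1. *)
by have /(balances_deficit x) [] := Bw ((sumn w)%:Z - 2 * (small_sum x w)%:Z - 1) ltac:(lia); lia.
Qed.

Fixpoint complete (s : seq nat) : bool :=
  if s is x :: r then complete r && (x <= 2 * sumn r + 1)%N else true.

Lemma complete_balanced s : complete s -> balanced s.
Proof.
elim: s => [_ l /=|x r IH /andP[/IH Br x_le] l /= /andP[lo hi]]; first lia.
have [r_lt|r_ge] := ltrP (sumn r)%:Z l.
  by exists 1 => //; apply: Br; rewrite mul1r; lia.
have [r_gt|r_le] := ltrP l (- (sumn r)%:Z).
  by exists (-1) => //; apply: Br; rewrite mulN1r opprK; lia.
by exists 0 => //; apply: Br; rewrite mul0r subr0; lia.
Qed.

Local Close Scope ring_scope.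

Lemma geq_trans : transitive geq. Proof. by move=> a b c /=; lia. Qed.
Lemma geq_total : total geq. Proof. by move=> a b /=; lia. Qed.
Lemma geq_anti : antisymmetric geq. Proof. by move=> a b /=; lia. Qed.

Lemma sorted_complete s :
  sorted geq s -> {in s, forall x, x <= 2 * small_sum x s + 1} -> complete s.
Proof.
elim: s => //= x r IH; rewrite path_sortedE; last exact: geq_trans.
case/andP=> /allP x_top r_sorted small_bound; apply/andP; split.
  apply: IH => // y yr; have yx : y <= x := x_top y yr.
  have /small_bound : y \in x :: r by rewrite inE yr orbT.
  by rewrite /small_sum /= ltnNge yx.
have := small_bound x (mem_head x r); rewrite /small_sum /= ltnn.
by have := small_sum_le x r; rewrite /small_sum; lia.
Qed.

Lemma balanced_complete s : sorted geq s -> balanced s -> complete s.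
Proof. by move=> s_sorted Bs; apply: sorted_complete => // x; apply: balanced_small. Qed.

Lemma complete_sumn_le s : complete s -> 2 * sumn s + 1 <= 3 ^ size s.
Proof. by elim: s => //= x r IH /andP[/IH r_le x_le]; rewrite expnS; lia. Qed.

Fixpoint powers3 (k : nat) : seq nat := if k is j.+1 then 3 ^ j :: powers3 j else [::].

Lemma sumn_powers3 k : 2 * sumn (powers3 k) + 1 = 3 ^ k.
Proof. by elim: k => //= k IH; rewrite expnS; lia. Qed.

Lemma complete_powers3 k : complete (powers3 k).
Proof. by elim: k => //= k ->; have := sumn_powers3 k; lia. Qed.

Lemma size_powers3 k : size (powers3 k) = k.
Proof. by elim: k => //= k ->. Qed.

Lemma powers3_gt0 k : all (fun x => 0 < x) (powers3 k).
Proof. by elim: k => //= k ->; rewrite expn_gt0. Qed.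

(* The witness is 1, 3, ..., 3^(k-2) topped up by the part n - (3^(k-1) - 1)/2. *)
Lemma exists_complete n : exists s,
  [/\ sumn s = n, all (fun x => 0 < x) s, complete s & size s = up_log 3 (2 * n + 1)].
Proof.
have [->|n_gt0] := posnP n; first by exists [::]; rewrite up_log1.
have n_gt1 : 1 < 2 * n + 1 by lia.
have /andP[lo hi] := up_log_bounds (isT : 1 < 3) n_gt1.
have := up_log_gt0 3 (2 * n + 1); rewrite n_gt1.
move: (up_log 3 (2 * n + 1)) lo hi => [|k] //= lo hi _.
have := sumn_powers3 k; rewrite expnS in hi => sum_pow.
exists (n - sumn (powers3 k) :: powers3 k); split.
- by rewrite /=; lia.
- by rewrite /= powers3_gt0 andbT; lia.
- by rewrite /= complete_powers3 /=; lia.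
- by rewrite /= size_powers3.
Qed.

Lemma up_log_le_size n w : weighing_partition n w -> up_log 3 (2 * n + 1) <= size w.
Proof.
case/weighing_partitionE=> sw _ Bw; have ws := permEl (perm_sort geq w).
have /complete_sumn_le : complete (sort geq w).
  by apply: balanced_complete (sort_sorted geq_total w) (balanced_perm _ Bw); rewrite perm_sym.
by rewrite (perm_sumn ws) (perm_size ws) sw; apply: up_log_min.
Qed.

Lemma feasible_partitionE n w :
  feasible_partition n w <-> weighing_partition n w /\ size w = up_log 3 (2 * n + 1).
Proof.
split=> [[Ww w_min]|[Ww sz]]; last by split=> // w'; rewrite sz; apply: up_log_le_size.
split=> //; apply/eqP; rewrite eqn_leq up_log_le_size // andbT.
have [s [sn s_pos s_complete <-]] := exists_complete n.
by apply: w_min; apply/weighing_partitionE; split=> //; apply: complete_balanced.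
Qed.

Lemma feasible_partition_perm n w w' :
  perm_eq w w' -> feasible_partition n w -> feasible_partition n w'.
Proof.
move=> ww' /feasible_partitionE[/weighing_partitionE[sw pos Bw] sz].
apply/feasible_partitionE; rewrite -(perm_size ww'); split=> //.
apply/weighing_partitionE; rewrite -(perm_sumn ww') -(perm_all _ ww').
by split=> //; apply: balanced_perm Bw.
Qed.

Lemma feasible_sorted n s : sorted geq s -> all (fun x => 0 < x) s -> sumn s = n ->
  feasible_partition n s <-> complete s && (size s == up_log 3 (2 * n + 1)).
Proof.
move=> s_sorted s_pos sn; rewrite feasible_partitionE weighing_partitionE.
split=> [[[_ _ /(balanced_complete s_sorted) ->] ->]|/andP[cs /eqP sz]].
  by rewrite eqxx.
by split=> //; split=> //; apply: complete_balanced.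
Qed.

Fixpoint dec_partitions_fuel (fuel n b : nat) : seq (seq nat) :=
  if n is 0 then [:: [::]] else
  if fuel is f.+1 then
    flatten [seq [seq M :: s | s <- dec_partitions_fuel f (n - M) M] | M <- iota 1 (minn b n)]
  else [::].

Definition dec_partitions (n b : nat) := dec_partitions_fuel n n b.

Lemma mem_dec_partitions_fuel fuel n b s : n <= fuel ->
  (s \in dec_partitions_fuel fuel n b) = [&& path geq b s, all (fun x => 0 < x) s & sumn s == n].
Proof.
elim: fuel n b s => [|f IH] [|n] b s //= n_le;
  try by rewrite inE; case: s => [|[|x] r] //=; rewrite !andbF.
apply/flattenP/and3P => [[_ /mapP[M] + -> /mapP[r r_in ->]]|].
  rewrite mem_iota => M_range; move: r_in; rewrite IH; last by lia.
  by case/and3P=> r_path r_pos /eqP r_sum; rewrite /= r_path r_pos; split=> //; lia.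
case: s => [|x r] /=; first by case=> _ _ /eqP.
case=> /andP[x_le r_path] /andP[x_pos r_pos] /eqP sum_eq.
exists [seq x :: s | s <- dec_partitions_fuel f (n.+1 - x) x].
  by apply/mapP; exists x => //; rewrite mem_iota; lia.
by apply/mapP; exists r => //; rewrite IH ?r_path ?r_pos //=; lia.
Qed.

Lemma mem_dec_partitions n b s :
  (s \in dec_partitions n b) = [&& path geq b s, all (fun x => 0 < x) s & sumn s == n].
Proof. exact: mem_dec_partitions_fuel. Qed.

Lemma dec_partitions_fuel_uniq fuel n b : uniq (dec_partitions_fuel fuel n b).
Proof.
elim: fuel n b => [|f IH] [|n] b //=.
elim: (iota 1 (minn b n.+1)) (iota_uniq 1 (minn b n.+1)) => //= M ms IHms /andP[M_new ms_uniq].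
rewrite cat_uniq IHms // map_inj_uniq ?IH //=; last by move=> s s' [].
rewrite andbT; apply/hasPn => _ /flattenP[_ /mapP[M' M'_in ->] /mapP[s _ ->]].
by apply/mapP=> -[s' _ [eMM' _]]; move: M_new; rewrite -eMM' M'_in.
Qed.

Lemma dec_partitions_uniq n b : uniq (dec_partitions n b).
Proof. exact: dec_partitions_fuel_uniq. Qed.

Lemma dec_partitions_fuelE f1 f2 n b : n <= f1 -> n <= f2 ->
  dec_partitions_fuel f1 n b = dec_partitions_fuel f2 n b.
Proof.
elim: f1 f2 n b => [|f1 IH] [|f2] [|n] b //= n_le1 n_le2; try lia.
by congr flatten; apply/eq_in_map => M; rewrite mem_iota => M_range; rewrite (IH f2) //; lia.
Qed.

Lemma dec_partitions_rec n b : 0 < n -> dec_partitions n b =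
  flatten [seq [seq M :: s | s <- dec_partitions (n - M) M] | M <- iota 1 (minn b n)].
Proof.
case: n => [|n] // _; rewrite [LHS]/dec_partitions [LHS]/=.
congr flatten; apply/eq_in_map => M; rewrite mem_iota => M_range.
by rewrite (dec_partitions_fuelE (f2 := n.+1 - M)) //; lia.
Qed.

Lemma count_mem_parts_of n (f : {ffun 'I_n -> 'I_n.+1}) v :
  count_mem v (parts_of f) = \sum_(i < n) (i.+1 == v) * f i.
Proof.
rewrite /parts_of count_flatten -map_comp sumnE big_map big_enum /=.
by apply: eq_bigr => i _; rewrite count_nseq.
Qed.

Lemma count_parts_of_ord n (f : {ffun 'I_n -> 'I_n.+1}) (i : 'I_n) :
  count_mem i.+1 (parts_of f) = f i.
Proof.
rewrite count_mem_parts_of (bigD1 i) //= eqxx mul1n big1 ?addn0 // => j ji.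
by rewrite eqSS val_eqE (negbTE ji).
Qed.

Lemma count_parts_of_out n (f : {ffun 'I_n -> 'I_n.+1}) v :
  ~~ (0 < v <= n) -> count_mem v (parts_of f) = 0.
Proof.
move=> v_out; rewrite count_mem_parts_of big1 // => i _.
by have := ltn_ord i; case: eqP v_out => // <-; lia.
Qed.

Lemma parts_of_perm_inj n (f g : {ffun 'I_n -> 'I_n.+1}) :
  perm_eq (parts_of f) (parts_of g) -> f = g.
Proof. by move/permP=> fg; apply/ffunP => i; apply/val_inj; rewrite /= -!count_parts_of_ord fg. Qed.

Lemma parts_of_onto n s : all (fun x => 0 < x <= n) s -> size s <= n ->
  exists f : {ffun 'I_n -> 'I_n.+1}, perm_eq (parts_of f) s.
Proof.
move=> s_range s_size; exists [ffun i : 'I_n => inord (count_mem i.+1 s)].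
apply/allP => v _ /=; apply/eqP; have [v_in|v_out] := boolP (0 < v <= n).
  have vn : v.-1 < n by lia.
  rewrite (_ : v = (Ordinal vn).+1); last by rewrite /=; lia.
  by rewrite count_parts_of_ord ffunE inordK // ltnS (leq_trans (count_size _ _)).
rewrite count_parts_of_out //; apply/esym/count_memPn; apply: contra v_out.
exact: (allP s_range).
Qed.

Lemma size_le_sumn s : all (fun x => 0 < x) s -> size s <= sumn s.
Proof. by elim: s => //= x r IH /andP[x_pos /IH]; lia. Qed.

Lemma mem_le_sumn s x : x \in s -> x <= sumn s.
Proof. by elim: s => //= y r IH; rewrite inE => /orP[/eqP ->|/IH]; lia. Qed.

(* Sorting identifies the multisets counted by [t] with non-increasing lists. *)
Lemma t_count n :
  t n = count (fun s => `[< feasible_partition n s >]) (dec_partitions n n).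
Proof.
rewrite /t cardE -(size_map (sort geq \o @parts_of n)) -size_filter.
apply/perm_size/uniq_perm; [|by rewrite filter_uniq ?dec_partitions_uniq|].
  rewrite map_inj_uniq ?enum_uniq // => f g /= fg; apply: parts_of_perm_inj.
  by rewrite -(perm_sort geq) fg perm_sort.
move=> s; rewrite mem_filter mem_dec_partitions.
apply/mapP/and4P => [[f]|[/asboolP s_feas s_path s_pos /eqP s_sum]].
  rewrite mem_enum inE => /asboolP f_feas -> /=; have fs := permEl (perm_sort geq (parts_of f)).
  have [/weighing_partitionE[f_sum f_pos _] _] := f_feas.
  rewrite (path_sortedE geq_trans) (sort_sorted geq_total).
  rewrite !(perm_all _ fs) (perm_sumn fs) f_sum f_pos eqxx !andbT.
  split=> //; last by apply/allP => x /mem_le_sumn /=; rewrite f_sum.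
  by apply/asboolP; apply: feasible_partition_perm f_feas; rewrite perm_sym.
have [f fs] : exists f : {ffun 'I_n -> 'I_n.+1}, perm_eq (parts_of f) s.
  apply: parts_of_onto; last by rewrite -s_sum size_le_sumn.
  apply/allP => x xs; rewrite (allP s_pos) //=.
  by move: s_path; rewrite (path_sortedE geq_trans) => /andP[/allP/(_ x xs)].
exists f.
  by rewrite mem_enum inE; apply/asboolP; apply: feasible_partition_perm s_feas; rewrite perm_sym.
apply: (sorted_eq geq_trans geq_anti); last by rewrite /= perm_sym perm_sort.
  by move: s_path; rewrite (path_sortedE geq_trans) => /andP[].
exact: sort_sorted geq_total _.
Qed.

Section BigNat.
Variables (R : Type) (idx : R).

Lemma big_nat_zero_prefix {a d b : nat} (op : Monoid.law idx) (F : nat -> R) : a <= d ->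
  (forall i, a <= i < d -> F i = idx) ->
  \big[op/idx]_(a <= i < b) F i = \big[op/idx]_(d <= i < b) F i.
Proof.
move=> ad F0; have [db|bd] := leqP d b.
  rewrite (big_cat_nat ad db) big1_seq ?Monoid.mul1m // => i /andP[_].
  by rewrite mem_index_iota; apply: F0.
rewrite [RHS]big_geq ?(ltnW bd) // big1_seq // => i /andP[_]; rewrite mem_index_iota => iab.
by apply: F0; lia.
Qed.

Lemma big_nat_zero_suffix {a d b : nat} (op : Monoid.law idx) (F : nat -> R) : d <= b ->
  (forall i, d <= i < b -> F i = idx) ->
  \big[op/idx]_(a <= i < b) F i = \big[op/idx]_(a <= i < d) F i.
Proof.
move=> db F0; have [ad|da] := leqP a d.
  rewrite (big_cat_nat ad db) [X in op _ X]big1_seq ?Monoid.mulm1 // => i /andP[_].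
  by rewrite mem_index_iota; apply: F0.
rewrite [RHS]big_geq ?(ltnW da) // big1_seq // => i /andP[_]; rewrite mem_index_iota => iab.
by apply: F0; lia.
Qed.

Lemma big_nat_rev_sub {b c : nat} (op : Monoid.com_law idx) (F : nat -> R) : b <= c ->
  \big[op/idx]_(b.+1 <= i < c.+1) F i = \big[op/idx]_(0 <= j < c - b) F (c - j).
Proof.
move=> bc; rewrite big_nat_rev -{1}(add0n b.+1) big_addn subSS.
by apply: eq_big_nat => i i_range; congr F; lia.
Qed.

End BigNat.

Definition ncomplete (k n b : nat) :=
  count (fun s => complete s && (size s == k)) (dec_partitions n b).

Lemma t_ncomplete n : t n = ncomplete (up_log 3 (2 * n + 1)) n n.
Proof.
rewrite t_count; apply: eq_in_count => s; rewrite mem_dec_partitions.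
case/and3P=> s_path s_pos /eqP s_sum.
have s_sorted : sorted geq s by move: s_path; rewrite (path_sortedE geq_trans) => /andP[].
by apply/asboolP/idP => /(feasible_sorted s_sorted s_pos s_sum).
Qed.

Lemma t_ncompleteE n k : 2 * n + 1 <= 3 ^ k < 3 * (2 * n + 1) -> t n = ncomplete k n n.
Proof.
move=> /andP[n_le n_gt]; rewrite t_ncomplete; congr ncomplete.
case: k n_le n_gt => [|k] n_le n_gt; first by rewrite (_ : 2 * n + 1 = 1) ?up_log1 //; lia.
by apply: up_log_eq => //; rewrite expnS in n_gt; rewrite n_le andbT; lia.
Qed.

Lemma ncomplete0 n b : ncomplete 0 n b = (n == 0).
Proof.
case: n => [|n] //; rewrite /ncomplete (eq_in_count (a2 := pred0)) ?count_pred0 // => s.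
by rewrite mem_dec_partitions => /and3P[_ _]; case: s => //= x r _; rewrite andbF.
Qed.

Lemma ncomplete_eq0 k n b : 3 ^ k < 2 * n + 1 -> ncomplete k n b = 0.
Proof.
move=> big_n; apply/eqP; rewrite -leqn0 leqNgt -has_count; apply/hasP => -[s].
rewrite mem_dec_partitions => /and3P[_ _ /eqP s_sum] /andP[/complete_sumn_le].
by rewrite s_sum => + /eqP s_size; rewrite s_size; lia.
Qed.

Lemma ncomplete_rec k n b : 0 < n -> ncomplete k.+1 n b =
  \sum_(1 <= M < (minn b n).+1) (3 * M <= 2 * n + 1) * ncomplete k (n - M) M.
Proof.
move=> n_gt0; rewrite /ncomplete dec_partitions_rec // count_flatten -map_comp sumnE big_map.
have -> : iota 1 (minn b n) = index_iota 1 (minn b n).+1 by rewrite /index_iota subSS subn0.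
apply: eq_big_nat => M M_range /=.
rewrite count_map; case: (leqP (3 * M) (2 * n + 1)) => M_small /=.
  rewrite mul1n; apply: eq_in_count => s; rewrite mem_dec_partitions => /and3P[_ _ /eqP s_sum] /=.
  by rewrite eqSS (_ : M <= 2 * sumn s + 1) ?andbT //; lia.
rewrite mul0n (eq_in_count (a2 := pred0)) ?count_pred0 // => s.
rewrite mem_dec_partitions => /and3P[_ _ /eqP s_sum] /=.
by rewrite (_ : M <= _ = false) ?andbF //; lia.
Qed.

Lemma ncomplete_geq k n b : n <= b -> ncomplete k n b = ncomplete k n n.
Proof.
case: n => [|n] nb //; rewrite /ncomplete !dec_partitions_rec //.
by rewrite minnn (minn_idPr nb).
Qed.

(* Splitting off the partitions whose largest part M exceeds b, indexed by
   R = n - M; such a part is admissible exactly when 3 M <= 2 n + 1. *)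
Lemma ncomplete_cap k n b : ncomplete k.+1 n n =
  ncomplete k.+1 n b + \sum_((n + 1) %/ 3 <= R < n - b) ncomplete k R (n - R).
Proof.
have [nb|bn] := leqP n b; first by rewrite ncomplete_geq // big_geq ?addn0 //; lia.
rewrite !ncomplete_rec ?minnn ?(minn_idPl (ltnW bn)); try lia.
rewrite (big_cat_nat (n := b.+1)) //=; last exact: ltnW.
rewrite (@big_nat_rev_sub _ _ b n addn) ?(ltnW bn) //.
congr (_ + _); rewrite (@big_nat_zero_prefix _ _ 0 ((n + 1) %/ 3) _ addn) // => [|R R_range].
  apply: eq_big_nat => R R_range /=.
  by rewrite (_ : 3 * (n - R) <= 2 * n + 1) ?mul1n 1?(_ : n - (n - R) = R) //; lia.
by rewrite /= (_ : 3 * (n - R) <= 2 * n + 1 = false) //; lia.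
Qed.

Lemma ncomplete_head k n b : (2 * n + 1) %/ 3 <= b -> ncomplete k n b = ncomplete k n n.
Proof.
case: k => [|k] b_big; first by rewrite !ncomplete0.
by rewrite (ncomplete_cap k n b) big_geq ?addn0 //; lia.
Qed.

Lemma ncomplete_tail k n b : 3 ^ k < 2 * (n - b) + 1 -> ncomplete k.+1 n b = 0.
Proof.
move=> big_rest; have [nb|bn] := leqP n b; first by move: big_rest; rewrite (_ : n - b = 0); lia.
rewrite ncomplete_rec ?big1_seq // => [M /andP[_]|]; last by lia.
by rewrite mem_index_iota => M_range; rewrite ncomplete_eq0 ?muln0 //; lia.
Qed.

Lemma t_shift k n : 3 ^ k < 2 * n + 1 <= 3 ^ k.+1 ->
  t n = \sum_((n + 1) %/ 3 <= R < n) ncomplete k R (n - R).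
Proof.
case/andP=> lo hi; rewrite (t_ncompleteE (k := k.+1)); last by rewrite hi expnS; lia.
by rewrite (ncomplete_cap k n 0) ncomplete_tail ?subn0.
Qed.

Definition inner_sum n R := \sum_((R + 1) %/ 3 <= S < 2 * R - n) t S.

Lemma ncomplete_window k n R : 3 * 3 ^ k + 1 <= 2 * n -> 4 * R <= 2 * n + 3 ^ k - 1 ->
  ncomplete k.+1 R (n - R) + inner_sum n R = ncomplete k.+1 R R.
Proof.
move=> n_lo R_hi; rewrite (ncomplete_cap k R (n - R)) (_ : R - (n - R) = 2 * R - n); last by lia.
congr addn; apply: eq_big_nat => S S_range.
by rewrite ncomplete_head -?(t_ncompleteE (k := k)) //; lia.
Qed.

Lemma t_low k n : 3 * 3 ^ k + 1 <= 2 * n -> 2 * n <= 5 * 3 ^ k + 1 ->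
  t n + \sum_((3 * n + 6) %/ 5 <= R < ((2 * n + 3 ^ k - 1) %/ 4).+1) inner_sum n R =
  \sum_((n + 1) %/ 3 <= R < ((2 * n + 3 ^ k - 1) %/ 4).+1) t R.
Proof.
move=> n_lo n_hi; have p_gt0 := expn_gt0 3 k; have p_odd : odd (3 ^ k) by rewrite oddX orbT.
rewrite (t_shift (k := k.+1)); last by rewrite !expnS; lia.
rewrite (big_nat_zero_suffix (d := ((2 * n + 3 ^ k - 1) %/ 4).+1));
  [|lia|by move=> R R_range; rewrite ncomplete_tail //; lia].
rewrite -(big_nat_zero_prefix (a := (n + 1) %/ 3) (d := (3 * n + 6) %/ 5));
  [|lia|by move=> R R_range; rewrite /inner_sum big_geq //; lia].
rewrite -big_split; apply: eq_big_nat => R R_range /=.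
rewrite ncomplete_window //; last by lia.
by rewrite (t_ncompleteE (k := k.+1)) // expnS; lia.
Qed.

Lemma t_high k n : 5 * 3 ^ k + 3 <= 2 * n -> 2 * n + 1 <= 9 * 3 ^ k ->
  t n = \sum_((n + 1) %/ 3 <= R < ((3 * 3 ^ k - 1) %/ 2).+1) t R.
Proof.
move=> n_lo n_hi; have p_gt0 := expn_gt0 3 k; have p_odd : odd (3 ^ k) by rewrite oddX orbT.
rewrite (t_shift (k := k.+1)); last by rewrite !expnS; lia.
rewrite (big_nat_zero_suffix (d := ((3 * 3 ^ k - 1) %/ 2).+1));
  [|lia|by move=> R R_range; rewrite ncomplete_eq0 // expnS; lia].
apply: eq_big_nat => R R_range.
rewrite ncomplete_head; last by lia.
by rewrite (t_ncompleteE (k := k.+1)) // expnS; lia.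
Qed.

Lemma sumZ_nat (a b : nat) F : sumZ a b F = \sum_(a <= k < b.+1) F k.
Proof.
rewrite /sumZ big_mkcond (big_nat_zero_prefix (d := a)) => // [|k /andP[_ ka]].
  by apply: eq_big_nat => k /andP[ak kb]; rewrite !lez_nat ak -ltnS kb.
by rewrite lez_nat leqNgt ka.
Qed.

Lemma sumZ_neg (a b : int) F : (b < 0)%R -> sumZ a b F = 0.
Proof. by move=> b_neg; rewrite /sumZ big1_seq // => k /andP[/andP[_ kb] _]; lia. Qed.

Local Open Scope ring_scope.

Lemma floor_ratz (u : int) (d : nat) : (0 < d)%N -> Num.floor (u%:~R / d%:R : rat) = (u %/ d)%Z.
Proof.
move=> d_gt0; apply: floor_def; have d_pos : 0 < d%:R :> rat by rewrite ltr0n.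
rewrite ler_pdivlMr // ltr_pdivrMr // -[d%:R]/(d%:Z%:~R) -!intrM ler_int ltr_int; nia.
Qed.

Lemma ceil_ratz (u : int) (d : nat) : (0 < d)%N -> Num.ceil (u%:~R / d%:R : rat) = - ((- u) %/ d)%Z.
Proof. by move=> d_gt0; rewrite ceilNfloor -mulNr -rmorphN floor_ratz. Qed.

Lemma ceil_n_sub1_div3 (n : nat) : Num.ceil ((n%:Q - 1) / 3) = ((n + 1) %/ 3)%N.
Proof. by rewrite (_ : n%:Q - 1 = (n%:Z - 1)%:~R) ?ceil_ratz //; [lia | rewrite intrB]. Qed.

Lemma floor_2n_add_p_sub1_div4 (n p : nat) : (0 < p)%N ->
  Num.floor ((2 * n%:Q + p%:R - 1) / 4) = ((2 * n + p - 1) %/ 4)%N.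
Proof.
move=> p_gt0; rewrite (_ : _ / 4 = (2 * n%:Z + p - 1)%:~R / 4%:R) ?floor_ratz //; first lia.
by rewrite intrB intrD intrM -!pmulrn.
Qed.

Lemma ceil_3n_add2_div5 (n : nat) : Num.ceil ((3 * n%:Q + 2) / 5) = ((3 * n + 6) %/ 5)%N.
Proof.
rewrite (_ : _ / 5 = (3 * n%:Z + 2)%:~R / 5%:R) ?ceil_ratz //; first lia.
by rewrite intrD intrM -!pmulrn.
Qed.

Lemma floor_3p_sub1_div2 (p : nat) : (0 < p)%N ->
  Num.floor ((3 * p%:R - 1) / 2 : rat) = ((3 * p - 1) %/ 2)%N.
Proof.
move=> p_gt0; rewrite (_ : _ / 2 = (3 * p%:Z - 1)%:~R / 2%:R) ?floor_ratz //; first lia.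
by rewrite intrB intrM -!pmulrn.
Qed.

Lemma sumZ_inner_sum (n R : nat) :
  sumZ (Num.ceil ((R%:Q - 1) / 3)) (2 * R%:Z - n%:Z - 1) t = inner_sum n R.
Proof.
rewrite ceil_n_sub1_div3 /inner_sum; have [Rn|nR] := leqP (n + 1) (2 * R).
  rewrite (_ : 2 * R%:Z - n%:Z - 1 = (2 * R - n - 1)%N) ?sumZ_nat; last by lia.
  by congr bigop; congr index_iota; lia.
by rewrite sumZ_neg ?big_geq //; lia.
Qed.

Lemma t0 : t 0 = 1%N. Proof. by rewrite t_ncomplete up_log1. Qed.
Lemma t1 : t 1 = 1%N. Proof. by rewrite t_ncomplete up_lognn. Qed.

Lemma pow3_ratE k : 3%:Q ^+ k = (3 ^ k)%:R.
Proof. by rewrite mulrz_nat natrX. Qed.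

Unset Implicit Arguments.

Theorem theorem6 (m : nat) : (0 < m)%N ->
  let A : rat := (3%:Q ^+ m.-1 + 1) / 2 in
  let P : rat := 3%:Q ^ (m%:Z - 2) in
  (forall n : nat, A <= n%:Q <= A + P ->
     (t n)%:Z =
       (sumZ (Num.ceil ((n%:Q - 1) / 3)) (Num.floor ((2 * n%:Q + P - 1) / 4)) t)%:Z
       - (sumZ (Num.ceil ((3 * n%:Q + 2) / 5)) (Num.floor ((2 * n%:Q + P - 1) / 4))
            (fun R => sumZ (Num.ceil ((R%:Q - 1) / 3)) (2 * R%:Z - n%:Z - 1) t))%:Z)
  /\
  (forall n : nat, A + P + 1 <= n%:Q <= (3%:Q ^+ m - 1) / 2 ->
     (t n)%:Z =
       (sumZ (Num.ceil ((n%:Q - 1) / 3)) (Num.floor ((3%:Q ^+ m.-1 - 1) / 2)) t)%:Z).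
Proof.
case: m => [|[|k]] // _ A P.
  (* For m = 1 the offset P = 1/3 is not integral; the only n in range is 1. *)
  have [-> ->] : A = 1 /\ P = 3^-1.
    by split; [rewrite /A expr0; lra | rewrite /P (_ : 1 - 2 = -1)].
  split=> n /andP[lo hi]; rewrite -pmulrn in lo hi; last first.
    by exfalso; move: lo hi; rewrite pow3_ratE expn1; lra.
  have /andP[n_ge1 n_lt2] : (1 <= n < 2)%N.
    by rewrite -(ler_nat rat) -(ltr_nat rat); apply/andP; split; lra.
  rewrite (_ : n = 1%N) ?ceil_n_sub1_div3; last by lia.
  rewrite (_ : Num.floor _ = 0) ?sumZ_nat ?big_nat1 ?t0 ?t1; last first.
    by rewrite (_ : _ / 4 = 1%:~R / 3%:R) ?floor_ratz // -pmulrn; field.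
  by rewrite big_geq.
set p := (3 ^ k)%N; have p_gt0 : (0 < p)%N := expn_gt0 3 k.
have e3 : 3%:Q ^+ k.+1 = 3 * p%:R by rewrite pow3_ratE expnS natrM.
have e9 : 3%:Q ^+ k.+2 = 9 * p%:R by rewrite pow3_ratE !expnS !natrM mulrA.
have eP : P = p%:R by rewrite /P (_ : _ - 2 = k%:Z) -?pow3_ratE //; lia.
split=> n /andP[lo hi]; rewrite /A -pmulrn e3 ?e9 eP in lo hi.
  have /andP[n_lo n_hi] : (p * 3 + 1 <= n * 2 <= p * 5 + 1)%N.
    by rewrite -!(ler_nat rat) !natrD !natrM; apply/andP; split; lra.
  rewrite eP ceil_n_sub1_div3 floor_2n_add_p_sub1_div4 // ceil_3n_add2_div5 !sumZ_nat.
  rewrite (eq_bigr _ (fun R _ => sumZ_inner_sum n R)) -(@t_low k n) ?PoszD ?addrK //; lia.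
have /andP[n_lo n_hi] : (p * 5 + 3 <= n * 2)%N && (n * 2 + 1 <= p * 9)%N.
  by rewrite -!(ler_nat rat) !natrD !natrM; apply/andP; split; lra.
by rewrite /= e3 ceil_n_sub1_div3 floor_3p_sub1_div2 // sumZ_nat -(@t_high k n) //; lia.
Qed.
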